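(* Let $G$ be a simple graph with $m$ edges and $t$ triangles, let $\epsilon\in(0,1)$, let $\widetilde{\alpha}$ be a positive integer and $\widetilde{t}>0$. Set $\gamma=\max\{\widetilde{\alpha},\widetilde{t}^{1/3}\}$, $\tau_d=\frac{8m\gamma^2}{\epsilon\widetilde{t}}$ and $\tau_t=12\gamma/\epsilon$. Let $H_d=\{e\in E: d(e)>\tau_d\}$ and $H_t=\{e\in E: t(e)>\tau_t\}$. If $\widetilde{\alpha}>\alpha(G)$ and $\widetilde{t}\in[t/4,t]$, then $|H_d|\le(\epsilon\widetilde{t})^{2/3}$ and $|H_t|\le(\epsilon\widetilde{t})^{2/3}$.
   Context: For an edge $e=\{u,v\}$, its degree is $d(e)=\min\{d(u),d(v)\}$, and $t(e)$ is the number of triangles of $G$ containing $e$. The arboricity $\alpha(G)$ is the minimum number of forests needed to cover the edge set of $G$. *)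

From Stdlib Require Import Reals ClassicalEpsilon.
From mathcomp Require Import all_boot.

Set Implicit Arguments.
Unset Strict Implicit.
Unset Printing Implicit Defensive.

Section Graph.
Variables (T : finType) (adj : rel T).

Definition edges : {set {set T}} :=
  [set e : {set T} | [exists x, exists y, adj x y && (e == [set x; y])]].

Definition deg (v : T) : nat := #|[set u | adj v u]|.

(* edge degree d(e) = min of the degrees of the endpoints of e
   (the identity #|T| of the fold exceeds every degree, so for a
   2-element e this is exactly minn (deg u) (deg v)). *)
Definition edeg (e : {set T}) : nat := \big[minn/#|T|]_(v in e) deg v.

Definition triangles : {set {set T}} :=
  [set S : {set T} | (#|S| == 3) &&
     [forall x in S, forall y in S, (x != y) ==> adj x y]].

Definition etri (e : {set T}) : nat := #|[set S in triangles | e \subset S]|.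

Definition forest (F : {set {set T}}) : Prop :=
  ~ exists c : seq T,
      [/\ uniq c, 3 <= size c & cycle (fun x y => [set x; y] \in F) c].

Definition covers_by_forests (k : nat) : Prop :=
  exists F : 'I_k -> {set {set T}},
    (forall i, F i \subset edges) /\ (forall i, forest (F i)) /\
    edges \subset \bigcup_(i < k) F i.

Definition coversb (k : nat) : bool :=
  if excluded_middle_informative (covers_by_forests k) then true else false.

Lemma forest_set1 (e : {set T}) : forest [set e].
Proof.
move=> [[|x [|y [|z s]]] [Hu Hs Hc]] //.
move: Hc; rewrite /cycle /= !inE => /and3P [/eqP Hxy /eqP Hyz _].
move: Hu => /= /andP [Hx /andP [Hy _]].
have : x \in [set y; z] by rewrite Hyz -Hxy !inE eqxx.
rewrite !inE => /orP [/eqP Exy|/eqP Exz].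
- by move: Hx; rewrite Exy !inE eqxx.
- by move: Hx; rewrite Exz !inE eqxx orbT.
Qed.

Lemma exists_cover : exists k, coversb k.
Proof.
exists #|edges|; rewrite /coversb; case: excluded_middle_informative => // [[]].
exists (fun i => [set enum_val i]); split; [|split].
- by move=> i; rewrite sub1set enum_valP.
- by move=> i; apply: forest_set1.
- apply/subsetP => e He; apply/bigcupP; exists (enum_rank_in He e) => //.
  by rewrite enum_rankK_in // inE.
Qed.

Definition arboricity : nat := ex_minn exists_cover.

End Graph.

Definition Rltb (x y : R) : bool := if Rlt_dec x y then true else false.

From Stdlib Require Import ClassicalEpsilon Reals Lra.
From mathcomp Require Import all_boot.

Set Implicit Arguments.
Unset Strict Implicit.
Unset Printing Implicit Defensive.

(* A forest has a leaf, and peeling leaves charges every edge e of a forest to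
   a distinct vertex of degree at least d(e) (Chiba-Nishizeki); covering E by
   alpha(G) forests thus gives sum_e d(e) <= alpha(G) sum_v d(v) <= 2 alpha(G) m.
   Likewise sum_e t(e) <= 3t <= 12 t~.  By Markov's inequality |H_d| tau_d and
   |H_t| tau_t are bounded by these sums, which for the chosen thresholds gives
   |H| gamma <= eps t~; since gamma >= t~^(1/3), this yields
   |H| <= eps t~^(2/3) <= (eps t~)^(2/3). *)

Section Walks.
Variables (T : finType) (r : rel T).

Lemma path_map_iota (w : nat -> T) :
  (forall k, r (w k) (w k.+1)) -> forall n i, path r (w i) (map w (iota i.+1 n)).
Proof. by move=> step; elim=> [|n IHn] i //=; rewrite step IHn. Qed.

Lemma exists_first_repeat (w : nat -> T) :
  exists i j, [/\ i < j, w i = w j & uniq (map w (iota 0 j))].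
Proof.
pose P j := ~~ uniq (map w (iota 0 j.+1)).
have [|j Pj minj] := @ex_minnP P.
  exists #|T|; apply/negP => /card_uniqP; rewrite size_map size_iota => card_eq.
  by have := max_card (mem (map w (iota 0 #|T|.+1))); rewrite card_eq ltnn.
have uniq_j : uniq (map w (iota 0 j)).
  case: j {Pj} minj => [|j] // minj.
  by apply/negPn/negP => /minj; rewrite ltnn.
move: Pj; rewrite /P -addn1 iotaD map_cat cats1 rcons_uniq uniq_j andbT negbK add0n.
by case/mapP => i; rewrite mem_iota => /andP [_ lt_ij] w_ji; exists i, j.
Qed.

Lemma nonbacktracking_walk_cycle (w : nat -> T) :
  irreflexive r -> (forall k, r (w k) (w k.+1)) -> (forall k, w k.+2 != w k) ->
  exists c, [/\ uniq c, 3 <= size c & cycle r c].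
Proof.
move=> r_irr step nonback.
have [i [j [lt_ij w_ij uniq_j]]] := exists_first_repeat w.
have [n def_j] : exists n, j = i + n.+1 by exists (j - i.+1); rewrite addnS -addSn subnKC.
exists (w i :: map w (iota i.+1 n)); split.
- by move: uniq_j; rewrite def_j iotaD map_cat cat_uniq add0n => /and3P [].
- rewrite /= size_map size_iota ltnS.
  case: n def_j => [|[|n]] def_j //.
  + by have := step i; rewrite w_ij def_j addn1 r_irr.
  + by have := nonback i; rewrite w_ij def_j addn2 eqxx.
- rewrite /=; have -> : rcons (map w (iota i.+1 n)) (w i) = map w (iota i.+1 n.+1).
    by rewrite w_ij def_j -(addn1 n) iotaD map_cat cats1 addSnnS addn1.
  exact: (path_map_iota step).
Qed.

Lemma exists_nonbacktracking_walk a b :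
  r a b -> (forall p x, r p x -> exists2 y, r x y & y != p) ->
  exists w : nat -> T, (forall k, r (w k) (w k.+1)) /\ (forall k, w k.+2 != w k).
Proof.
move=> r_ab no_dead_end.
pose next p x := odflt x [pick y | r x y && (y != p)].
have next_spec p x : r p x -> r x (next p x) && (next p x != p).
  move=> r_px; rewrite /next; case: pickP => [y -> //|none].
  by have [y r_xy ne_yp] := no_dead_end _ _ r_px; have := none y; rewrite r_xy ne_yp.
pose w n := (iter n (fun q : T * T => (q.2, next q.1 q.2)) (a, b)).1.
have step k : r (w k) (w k.+1).
  by elim: k => [|k IHk] //; case/andP: (next_spec _ _ IHk).
by exists w; split=> // k; case/andP: (next_spec _ _ (step k)).
Qed.

End Walks.

Lemma geq_bigminn (I : finType) (A : {pred I}) (F : I -> nat) x0 i :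
  i \in A -> \big[minn/x0]_(j in A) F j <= F i.
Proof.
move=> iA; rewrite -big_filter.
have : i \in [seq j <- index_enum I | j \in A] by rewrite mem_filter iA mem_index_enum.
elim: (filter _ _) => [|j s IHs] //; rewrite in_cons big_cons => /predU1P [<-|/IHs].
  exact: geq_minl.
exact: leq_trans (geq_minr _ _).
Qed.

Section Forests.
Variables (T : finType) (adj : rel T).
Hypothesis adj_irr : irreflexive adj.

Lemma edgesP e : reflect (exists a b, adj a b /\ e = [set a; b]) (e \in edges adj).
Proof.
rewrite inE; apply: (iffP existsP) => [[a /existsP [b /andP [ab /eqP ->]]]|[a [b [ab ->]]]].
  by exists a, b.
by exists a; apply/existsP; exists b; rewrite ab eqxx.
Qed.

Lemma edge_neq x y : [set x; y] \in edges adj -> x != y.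
Proof.
case/edgesP => a [b [ab xy_ab]]; apply: contraTneq ab => eq_xy.
have : [set a; b] \subset [set x] by rewrite -xy_ab -eq_xy setUid.
by rewrite subUset !sub1set !inE => /andP [/eqP -> /eqP ->]; rewrite adj_irr.
Qed.

Lemma forest_subset (F F' : {set {set T}}) : F' \subset F -> forest F -> forest F'.
Proof.
move=> sub_F'F forestF [c [uniq_c size_c cycle_c]]; apply: forestF; exists c; split=> //.
by apply: sub_cycle cycle_c => x y; apply: (subsetP sub_F'F).
Qed.

Lemma forest_has_leaf (F : {set {set T}}) :
  F \subset edges adj -> forest F -> F != set0 ->
  exists e v, [/\ e \in F, v \in e & forall e', e' \in F -> v \in e' -> e' = e].
Proof.
move=> sub_FE forestF /set0Pn [e0 e0F].
case: (boolP [exists e in F, exists v in e, [forall e' in F, (v \in e') ==> (e' == e)]]).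
  case/exists_inP => e eF /exists_inP [v ve /forall_inP leaf].
  by exists e, v; split=> // e' e'F ve'; apply/eqP; move: (leaf e' e'F); rewrite ve'.
move/exists_inPn => no_leaf; exfalso; apply: forestF.
(* Without a leaf, a walk along F never has to backtrack, hence closes a cycle. *)
pose r x y := [set x; y] \in F.
have r_irr : irreflexive r.
  by move=> x; apply/negP => /(subsetP sub_FE) /edge_neq; rewrite eqxx.
have no_dead_end p x : r p x -> exists2 y, r x y & y != p.
  move=> r_px; have /exists_inPn /(_ x) := no_leaf _ r_px.
  rewrite !inE eqxx orbT => /(_ isT) /forall_inPn [e' e'F].
  rewrite negb_imply => /andP [xe' ne_e'].
  case/edgesP: (subsetP sub_FE _ e'F) => a [b [_ def_e']].
  move: e'F xe' ne_e'; rewrite def_e' !inE => e'F /orP [] /eqP -> ne_e'.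
  - exists b; first exact: e'F.
    by apply: contraNneq ne_e' => ->; rewrite setUC.
  - exists a; first by rewrite /r setUC.
    by apply: contraNneq ne_e' => ->.
case/edgesP: (subsetP sub_FE _ e0F) => a [b [_ def_e0]].
have r_ab : r a b by rewrite /r -def_e0.
have [w [step nonback]] := exists_nonbacktracking_walk r_ab no_dead_end.
exact: nonbacktracking_walk_cycle r_irr step nonback.
Qed.

Lemma forest_sum_edeg_le (F : {set {set T}}) (S : {set T}) :
  F \subset edges adj -> forest F -> (forall e, e \in F -> e \subset S) ->
  \sum_(e in F) edeg adj e <= \sum_(v in S) deg adj v.
Proof.
have [n ltFn] := ubnP #|F|; elim: n => // n IHn in F S ltFn *.
move=> sub_FE forestF sub_S.
have [->|nzF] := eqVneq F set0; first by rewrite big_set0.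
have [e [v [eF ve leaf]]] := forest_has_leaf sub_FE forestF nzF.
have vS : v \in S := subsetP (sub_S e eF) v ve.
rewrite (big_setD1 _ eF) (big_setD1 _ vS) /= leq_add ?geq_bigminn ?IHn //.
- by move: ltFn; rewrite (cardsD1 e) eF.
- exact: subset_trans (subsetDl _ _) sub_FE.
- exact: forest_subset (subsetDl _ _) forestF.
move=> e'; rewrite !inE => /andP [ne_e'e e'F]; apply/subsetP => u ue'.
rewrite !inE (subsetP (sub_S _ e'F)) // andbT.
by apply: contraNneq ne_e'e => eq_uv; rewrite (leaf _ e'F) // -eq_uv.
Qed.

Lemma arboricity_covers : covers_by_forests adj (arboricity adj).
Proof.
have : coversb adj (arboricity adj) by rewrite /arboricity; case: ex_minnP.
by rewrite /coversb; case: excluded_middle_informative.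
Qed.

Lemma sum_edeg_le_arboricity :
  \sum_(e in edges adj) edeg adj e <= arboricity adj * \sum_v deg adj v.
Proof.
have [F [sub_FE [forestF cover]]] := arboricity_covers.
rewrite -{1}(card_ord (arboricity adj)) -sum_nat_const.
apply: (@leq_trans (\sum_(i < arboricity adj) \sum_(e in F i) edeg adj e)).
  rewrite (exchange_big_dep (mem (edges adj))) /=; last by move=> i e _ /(subsetP (sub_FE i)).
  apply: leq_sum => e /(subsetP cover) /bigcupP [i _ eFi].
  by rewrite (bigD1 i) //=; apply: leq_addr.
apply: leq_sum => i _.
rewrite [X in _ <= X](eq_bigl (mem [set: T])) => [|v]; last by rewrite /= in_setT.
by apply: forest_sum_edeg_le => // e _; apply: subsetT.
Qed.

Lemma sum_deg_le : \sum_v deg adj v <= 2 * #|edges adj|.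
Proof.
have -> : \sum_v deg adj v = \sum_v \sum_(u | adj v u) 1.
  by apply: eq_bigr => v _; rewrite sum1dep_card.
rewrite pair_big_dep /=.
rewrite (partition_big (fun p : T * T => [set p.1; p.2]) (mem (edges adj))) /=; last first.
  by move=> p adj_p; apply/edgesP; exists p.1, p.2.
rewrite mulnC -sum_nat_const leq_sum // => e /edgesP [a [b [_ ->]]].
rewrite sum1dep_card (leq_trans _ (_ : #|[set (a, b); (b, a)]| <= 2)) //; last first.
  by rewrite cards2 ltnS leq_b1.
apply: subset_leq_card; apply/subsetP => -[x y]; rewrite !inE /= => /andP [adj_xy /eqP xy_ab].
have : x \in [set a; b] by rewrite -xy_ab !inE eqxx.
have : y \in [set a; b] by rewrite -xy_ab !inE eqxx orbT.
rewrite !inE => /orP [] /eqP ey /orP [] /eqP ex; subst x y; rewrite ?eqxx ?orbT //.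
all: by rewrite adj_irr in adj_xy.
Qed.

Lemma sum_etri_le : \sum_(e in edges adj) etri adj e <= 3 * #|triangles adj|.
Proof.
have -> : \sum_(e in edges adj) etri adj e =
          \sum_(e in edges adj) \sum_(S in triangles adj | e \subset S) 1.
  by apply: eq_bigr => e _; rewrite sum1dep_card; apply: eq_card => S; rewrite !inE.
rewrite (exchange_big_dep (mem (triangles adj))) /=; last by move=> e S _ /andP [].
rewrite mulnC -sum_nat_const leq_sum // => S; rewrite inE => /andP [/eqP card_S _].
rewrite sum1dep_card.
apply: (@leq_trans #|[set A : {set T} | A \subset S & #|A| == 2]|).
  apply: subset_leq_card; apply/subsetP => e; rewrite inE => /and3P [eE _ eS].
  have /edgesP [a [b [_ def_e]]] := eE.
  by rewrite inE eS def_e cards2 edge_neq // -def_e.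
by rewrite cards_draws card_S.
Qed.

End Forests.

Local Open Scope R_scope.

Lemma RltbP (x y : R) : reflect (x < y) (Rltb x y).
Proof. by rewrite /Rltb; case: Rlt_dec => ?; constructor. Qed.

Lemma markov_card (I : finType) (A : {set I}) (f : I -> nat) (tau : R) :
  INR #|[set i in A | Rltb tau (INR (f i))]| * tau <= INR (\sum_(i in A) f i).
Proof.
rewrite -sum1dep_card.
apply: Rle_trans (_ : INR (\sum_(i in A | Rltb tau (INR (f i))) f i) <= _); last first.
  apply/le_INR/leP.
  by rewrite [X in (_ <= X)%N](bigID (fun i => Rltb tau (INR (f i)))) leq_addr.
elim/big_ind2: _ => [|n1 s1 n2 s2 IH1 IH2|i /andP [_ /RltbP]]; rewrite /= ?plus_INR; lra.
Qed.

Lemma card_high_edeg_mul_le (T : finType) (adj : rel T) (tau : R) :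
  irreflexive adj ->
  INR #|[set e in edges adj | Rltb tau (INR (edeg adj e))]| * tau <=
  2 * INR (arboricity adj) * INR #|edges adj|.
Proof.
move=> adj_irr; apply: Rle_trans (markov_card _ _ _) _.
rewrite -(INR_IZR_INZ 2) -!mult_INR !multE; apply/le_INR/leP.
apply: leq_trans (sum_edeg_le_arboricity adj_irr) _.
by rewrite [(2 * _)%N]mulnC -mulnA leq_mul2l sum_deg_le ?orbT.
Qed.

Lemma card_high_etri_mul_le (T : finType) (adj : rel T) (tau : R) :
  irreflexive adj ->
  INR #|[set e in edges adj | Rltb tau (INR (etri adj e))]| * tau <=
  3 * INR #|triangles adj|.
Proof.
move=> adj_irr; apply: Rle_trans (markov_card _ _ _) _.
by rewrite -(INR_IZR_INZ 3) -mult_INR; apply/le_INR/leP/sum_etri_le.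
Qed.

Lemma Rpower_ge_base x a : 0 < x <= 1 -> 0 <= a <= 1 -> x <= Rpower x a.
Proof.
move=> x_bds a_bds.
have split_x : x = Rpower x (1 - a) * Rpower x a.
  by rewrite -Rpower_plus (_ : 1 - a + a = 1) ?Rpower_1 //; lra.
have : Rpower x (1 - a) <= Rpower 1 (1 - a) by apply: Rle_Rpower_l; lra.
rewrite {2}/Rpower ln_1 Rmult_0_r exp_0.
have : 0 < Rpower x a by apply: exp_pos.
nra.
Qed.

Lemma le_Rpower_two_thirds eps tt g X :
  0 < eps <= 1 -> 0 < tt -> Rpower tt (1 / 3) <= g -> X * g <= eps * tt ->
  X <= Rpower (eps * tt) (2 / 3).
Proof.
move=> eps_bds tt_gt0 root_le_g X_bound.
have split_tt : tt = Rpower tt (1 / 3) * Rpower tt (2 / 3).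
  by rewrite -Rpower_plus (_ : 1 / 3 + 2 / 3 = 1) ?Rpower_1 //; field.
have root_gt0 : 0 < Rpower tt (1 / 3) by apply: exp_pos.
have pow_gt0 : 0 < Rpower tt (2 / 3) by apply: exp_pos.
have eps_le : eps <= Rpower eps (2 / 3) by apply: Rpower_ge_base; lra.
rewrite -Rpower_mult_distr; try lra.
have : 0 < Rpower eps (2 / 3) by apply: exp_pos.
have [X_le0|X_gt0] := Rle_or_lt X 0; nra.
Qed.

Lemma mul_le_of_sq_threshold (N m a g K : R) :
  0 <= N <= m -> 0 < g -> 0 < K -> a <= g ->
  N * (8 * m * g ^ 2 / K) <= 2 * a * m -> N * g <= K.
Proof.
move=> N_bds g_gt0 K_gt0 le_ag N_bound.
have [m_gt0|m_eq0] := Rle_lt_or_eq_dec 0 m (Rle_trans _ _ _ (proj1 N_bds) (proj2 N_bds)).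
  have scaled : N * (8 * m * g ^ 2) <= 2 * g * m * K.
    rewrite (_ : 8 * m * g ^ 2 = 8 * m * g ^ 2 / K * K); last by field; lra.
    rewrite -Rmult_assoc; apply: Rmult_le_compat_r; nra.
  have mgK_gt0 : 0 < m * g * K by apply: Rmult_lt_0_compat; nra.
  by apply: (Rmult_le_reg_l (8 * m * g)); nra.
by rewrite (_ : N = 0); nra.
Qed.

Theorem claim3p4 (T : finType) (adj : rel T)
  (adj_sym : symmetric adj) (adj_irr : irreflexive adj)
  (eps : R) (alpha_t : nat) (t_t : R) :
  0 < eps < 1 -> (0 < alpha_t)%N -> 0 < t_t ->
  let m := INR #|edges adj| in
  let t := INR #|triangles adj| in
  let gamma := Rmax (INR alpha_t) (Rpower t_t (1 / 3)) in
  let tau_d := 8 * m * gamma ^ 2 / (eps * t_t) in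
  let tau_t := 12 * gamma / eps in
  let H_d := [set e in edges adj | Rltb tau_d (INR (edeg adj e))] in
  let H_t := [set e in edges adj | Rltb tau_t (INR (etri adj e))] in
  (arboricity adj < alpha_t)%N ->
  t / 4 <= t_t <= t ->
  INR #|H_d| <= Rpower (eps * t_t) (2 / 3) /\
  INR #|H_t| <= Rpower (eps * t_t) (2 / 3).
Proof.
move=> eps_bds _ tt_gt0 m t gamma tau_d tau_t H_d H_t arb_lt tt_bds.
have root_le_gamma : Rpower t_t (1 / 3) <= gamma := Rmax_r _ _.
have arb_le_gamma : INR (arboricity adj) <= gamma.
  by apply: Rle_trans (Rmax_l _ _); apply/le_INR/leP/ltnW.
have gamma_gt0 : 0 < gamma.
  by apply: Rlt_le_trans root_le_gamma; apply: exp_pos.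
split; apply: (le_Rpower_two_thirds _ tt_gt0 root_le_gamma); try lra.
- have Hd_bds : 0 <= INR #|H_d| <= m.
    split; first exact: pos_INR.
    by apply/le_INR/leP/subset_leq_card/subsetP => e; rewrite inE => /andP [].
  have K_gt0 : 0 < eps * t_t by nra.
  exact: mul_le_of_sq_threshold Hd_bds gamma_gt0 K_gt0 arb_le_gamma
    (card_high_edeg_mul_le tau_d adj_irr).
- have Ht_bound : INR #|H_t| * tau_t <= 3 * t := card_high_etri_mul_le tau_t adj_irr.
  have tau_t_eq : tau_t * eps = 12 * gamma by rewrite /tau_t; field; lra.
  nra.
Qed.
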